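(* Consider Problem 2 (defined in the context) with $k_1>k_2$ and $\bar P\ge F k_2$. Let $M=\left\lfloor\frac{\bar P-Fk_2}{k_1-k_2}\right\rfloor$. (i) If $B_3>B_2$, an optimal solution is $$X_1=\min\left\{\left\lfloor\tfrac{C}{I^S}\right\rfloor,\ F,\ M\right\},\quad X_2=\max\left\{0,\ \min\{F,M\}-X_1\right\},\quad X_3=F-X_1-X_2,$$ and the optimal value is $B^*=B_2X_2+B_3X_3$. (ii) If $B_3\le B_2$, an optimal solution is $$X_1=\min\left\{\left\lfloor\tfrac{C}{I^S}\right\rfloor,\ F,\ M\right\},\quad X_2=0,\quad X_3=F-X_1,$$ and the optimal value is $B^*=B_3X_3$.
   Context: Problem 2: Given a positive integer $F$ (number of equally popular tasks), reals $I^S>0$ (remote input data size per task), $C\ge 0$ (cache size), $\bar P$ (average power budget), $k_1>0$ and $k_2>0$ (average power consumed per task by local computing and by uplink transmission for MEC computing, respectively), $B_1=0$, and $B_2,B_3>0$ (the minimum bandwidths per task for route 2 ''local computing without local caching'' and route 3 ''MEC computing''; route 1 is ''local computing with local caching''), minimize $X_1B_1+X_2B_2+X_3B_3$ over nonnegative integers $X_1,X_2,X_3$ (numbers of tasks served via routes 1, 2, 3) subject to $I^SX_1\le C$, $k_1(X_1+X_2)+k_2X_3\le\bar P$, and $X_1+X_2+X_3=F$. $\lfloor\cdot\rfloor$ denotes the floor function. *)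

From Stdlib Require Import Reals Lra Lia ZArith Arith.
Open Scope R_scope.

(* Floor of a real number, as an integer. Stdlib's Int_part r = up r - 1 is
   exactly the floor of r. *)
Definition floorZ (x : R) : Z := Int_part x.

Definition floor_nat (x : R) : nat := Z.to_nat (floorZ x).

Definition feasible (F : nat) (IS C Pbar k1 k2 : R) (X1 X2 X3 : nat) : Prop :=
  IS * INR X1 <= C /\
  k1 * (INR X1 + INR X2) + k2 * INR X3 <= Pbar /\
  (X1 + X2 + X3)%nat = F.

Definition objective (B1 B2 B3 : R) (X1 X2 X3 : nat) : R :=
  INR X1 * B1 + INR X2 * B2 + INR X3 * B3.

Definition optimal (F : nat) (IS C Pbar k1 k2 B1 B2 B3 : R) (X1 X2 X3 : nat) : Prop :=
  feasible F IS C Pbar k1 k2 X1 X2 X3 /\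
  forall Y1 Y2 Y3 : nat, feasible F IS C Pbar k1 k2 Y1 Y2 Y3 ->
    objective B1 B2 B3 X1 X2 X3 <= objective B1 B2 B3 Y1 Y2 Y3.

(* With X3 = F - X1 - X2 the constraints become X1 <= floor(C/I^S) and
   X1 + X2 <= M, while (B1 = 0) the objective is
   B3 F - B2 X1 - (B3 - B2) (X1 + X2) = B3 F - B3 X1 + (B2 - B3) X2.
   If B3 > B2 the first form shows that X1 and X1 + X2 should both be as large
   as possible; if B3 <= B2 the second shows that X1 should be maximal and
   X2 = 0. *)

From Stdlib Require Import Reals Lra Lia ZArith Arith.
Open Scope R_scope.

Lemma floor_nat_le (x : R) : 0 <= x -> INR (floor_nat x) <= x.
Proof.
  intros Hx; unfold floor_nat, floorZ.
  destruct (base_Int_part x) as [Hle Hgt].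
  assert (Hnneg : (0 <= Int_part x)%Z).
  { assert (-1 < Int_part x)%Z by (apply lt_IZR; lra). lia. }
  rewrite INR_IZR_INZ, Z2Nat.id by exact Hnneg.
  exact Hle.
Qed.

Lemma le_floor_nat (n : nat) (x : R) : INR n <= x -> (n <= floor_nat x)%nat.
Proof.
  intros Hx; unfold floor_nat, floorZ.
  destruct (base_Int_part x) as [_ Hgt].
  rewrite INR_IZR_INZ in Hx.
  assert (Z.of_nat n - 1 < Int_part x)%Z.
  { apply lt_IZR; rewrite minus_IZR; simpl; lra. }
  lia.
Qed.

Lemma le_floor_nat_div (n : nat) (a b : R) :
  0 < a -> 0 <= b -> (n <= floor_nat (b / a))%nat <-> a * INR n <= b.
Proof.
  intros Ha Hb; split.
  - intros Hn.
    assert (Hba : 0 <= b / a) by (unfold Rdiv; apply Rmult_le_pos; [lra | apply Rlt_le, Rinv_0_lt_compat, Ha]).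
    apply le_INR in Hn.
    pose proof (floor_nat_le _ Hba) as Hfl.
    replace b with (a * (b / a)) by (field; lra).
    apply Rmult_le_compat_l; lra.
  - intros Hn; apply le_floor_nat.
    apply Rmult_le_reg_l with a; [exact Ha|].
    replace (a * (b / a)) with b by (field; lra).
    exact Hn.
Qed.

Lemma sum3_INR (X1 X2 X3 F : nat) :
  (X1 + X2 + X3)%nat = F -> INR F = INR X1 + INR X2 + INR X3.
Proof. intros <-; rewrite !plus_INR; reflexivity. Qed.

Lemma objective_B1_0 (F : nat) (B2 B3 : R) (X1 X2 X3 : nat) :
  (X1 + X2 + X3)%nat = F ->
  objective 0 B2 B3 X1 X2 X3 = B3 * INR F - B3 * INR X1 + (B2 - B3) * INR X2.
Proof. intros HF; unfold objective; rewrite (sum3_INR _ _ _ _ HF); ring. Qed.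

Lemma objective_le_route2_cheaper (F : nat) (B2 B3 : R) (X1 X2 X3 Y1 Y2 Y3 : nat) :
  0 <= B2 <= B3 ->
  (X1 + X2 + X3)%nat = F -> (Y1 + Y2 + Y3)%nat = F ->
  (Y1 <= X1)%nat -> (Y1 + Y2 <= X1 + X2)%nat ->
  objective 0 B2 B3 X1 X2 X3 <= objective 0 B2 B3 Y1 Y2 Y3.
Proof.
  intros HB HX HY H1 H12.
  rewrite (objective_B1_0 _ _ _ _ _ _ HX), (objective_B1_0 _ _ _ _ _ _ HY).
  apply le_INR in H1; apply le_INR in H12; rewrite !plus_INR in H12.
  assert (0 <= B2 * (INR X1 - INR Y1)) by (apply Rmult_le_pos; lra).
  assert (0 <= (B3 - B2) * (INR X1 + INR X2 - (INR Y1 + INR Y2)))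
    by (apply Rmult_le_pos; lra).
  lra.
Qed.

Lemma objective_le_route3_cheaper (F : nat) (B2 B3 : R) (X1 X3 Y1 Y2 Y3 : nat) :
  0 <= B3 <= B2 ->
  (X1 + 0 + X3)%nat = F -> (Y1 + Y2 + Y3)%nat = F -> (Y1 <= X1)%nat ->
  objective 0 B2 B3 X1 0 X3 <= objective 0 B2 B3 Y1 Y2 Y3.
Proof.
  intros HB HX HY H1.
  rewrite (objective_B1_0 _ _ _ _ _ _ HX), (objective_B1_0 _ _ _ _ _ _ HY).
  apply le_INR in H1; pose proof (pos_INR Y2); simpl INR.
  assert (0 <= B3 * (INR X1 - INR Y1)) by (apply Rmult_le_pos; lra).
  assert (0 <= (B2 - B3) * INR Y2) by (apply Rmult_le_pos; lra).
  lra.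
Qed.

Lemma feasibleE (F : nat) (IS C Pbar k1 k2 : R) (X1 X2 X3 : nat) :
  0 < IS -> 0 <= C -> k2 < k1 -> INR F * k2 <= Pbar ->
  feasible F IS C Pbar k1 k2 X1 X2 X3 <->
  (X1 <= floor_nat (C / IS))%nat /\
  (X1 + X2 <= floor_nat ((Pbar - INR F * k2) / (k1 - k2)))%nat /\
  (X1 + X2 + X3)%nat = F.
Proof.
  intros hIS hC hk12 hP.
  rewrite (le_floor_nat_div X1 IS C hIS hC).
  rewrite (le_floor_nat_div (X1 + X2) (k1 - k2) (Pbar - INR F * k2)) by lra.
  unfold feasible; rewrite plus_INR.
  split; intros [Hcache [Hpower HF]]; repeat split; try assumption;
    rewrite (sum3_INR _ _ _ _ HF) in *; lra.
Qed.

Theorem theorem1 (F : nat) (IS C Pbar k1 k2 B1 B2 B3 : R)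
  (hF : (0 < F)%nat) (hIS : 0 < IS) (hC : 0 <= C)
  (hk1 : 0 < k1) (hk2 : 0 < k2) (hB1 : B1 = 0) (hB2 : 0 < B2) (hB3 : 0 < B3)
  (hk12 : k1 > k2) (hP : Pbar >= INR F * k2) :
  let M := floor_nat ((Pbar - INR F * k2) / (k1 - k2)) in
  let X1 := Nat.min (floor_nat (C / IS)) (Nat.min F M) in
  (B3 > B2 ->
     let X2 := Nat.max 0 (Nat.min F M - X1) in
     let X3 := (F - X1 - X2)%nat in
     optimal F IS C Pbar k1 k2 B1 B2 B3 X1 X2 X3 /\
     objective B1 B2 B3 X1 X2 X3 = B2 * INR X2 + B3 * INR X3) /\
  (B3 <= B2 ->
     let X2 := 0%nat in
     let X3 := (F - X1)%nat in
     optimal F IS C Pbar k1 k2 B1 B2 B3 X1 X2 X3 /\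
     objective B1 B2 B3 X1 X2 X3 = B3 * INR X3).
Proof.
  intros M X1; subst B1.
  assert (Hfeas : forall Y1 Y2 Y3, feasible F IS C Pbar k1 k2 Y1 Y2 Y3 <->
    (Y1 <= floor_nat (C / IS))%nat /\ (Y1 + Y2 <= M)%nat /\ (Y1 + Y2 + Y3)%nat = F)
    by (intros; apply feasibleE; lra).
  split; intros HB X2 X3.
  - assert (HX : feasible F IS C Pbar k1 k2 X1 X2 X3)
      by (apply Hfeas; unfold X3, X2, X1; lia).
    split; [split; [exact HX|]|unfold objective; ring].
    intros Y1 Y2 Y3 HY; apply Hfeas in HY; apply Hfeas in HX.
    apply objective_le_route2_cheaper with F; [lra | .. ]; unfold X2, X1 in *; lia.
  - assert (HX : feasible F IS C Pbar k1 k2 X1 X2 X3)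
      by (apply Hfeas; unfold X3, X2, X1; lia).
    split; [split; [exact HX|]|unfold objective, X2; simpl; ring].
    intros Y1 Y2 Y3 HY; apply Hfeas in HY; apply Hfeas in HX.
    apply objective_le_route3_cheaper with F; [lra | .. ]; unfold X1 in *; lia.
Qed.
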